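(* In the common-ownership game below, there is no ownership structure $\mathbf K$ and no equilibrium $(\mathbf A^*,\mathbf q^* )$ such that $\mathbf A^*\mathbf q^*=\boldsymbol\beta$ and $\mathbf q^*=\boldsymbol\gamma$.
   Context: Model: integers $n\ge2$, $m\ge2$; $\alpha>0$, $\boldsymbol\beta\in\mathbb R^m$ with $\|\boldsymbol\beta\|_2=1$, $\boldsymbol\gamma\in\mathbb R^n$ with all $\gamma_i>0$. Firm $i$ chooses a unit vector $\mathbf a_i\in\mathbb R^m$ and $q_i\ge0$; $\mathbf A=[\mathbf a_1,\dots,\mathbf a_n]$. Standalone profit: $\Pi_i=\alpha q_i\mathbf a_i^\top(\boldsymbol\beta-\sum_{j\ne i}q_j\mathbf a_j)-(1+\alpha)q_i^2+\gamma_iq_i$. An ownership structure is an $n\times n$ matrix $\mathbf K=[\kappa_{ij}]$ with nonnegative entries, $\kappa_{ii}=1$, and $(\mathbf K+\mathbf K^\top)/2$ positive semidefinite. Firm $i$ maximizes $\tilde\Pi_i=\Pi_i+\sum_{j\ne i}\kappa_{ij}\Pi_j$; an equilibrium is a profile $(\mathbf A^*,\mathbf q^* )$ in which each $(\mathbf a_i^*,q_i^* )$ maximizes $\tilde\Pi_i$ over unit $\mathbf a_i$, $q_i\ge0$ given the others' choices. *)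

From HB Require Import structures.
From mathcomp Require Import all_boot all_order all_algebra.
From mathcomp Require Import reals.
Set Implicit Arguments. Unset Strict Implicit. Unset Printing Implicit Defensive.
Import Order.TTheory GRing.Theory Num.Theory.
Local Open Scope ring_scope.

Section Game.
Variable R : realType.

Definition unit_vec (m : nat) (a : 'cV[R]_m) : Prop := (a^T *m a) 0 0 = 1.

Definition profit (n m : nat) (alpha : R) (beta : 'cV[R]_m) (gamma : 'cV[R]_n)
  (A : 'M[R]_(m, n)) (q : 'cV[R]_n) (i : 'I_n) : R :=
  alpha * q i 0 * ((col i A)^T *m (beta - \sum_(j < n | j != i) q j 0 *: col j A)) 0 0
  - (1 + alpha) * q i 0 ^+ 2 + gamma i 0 * q i 0.

Definition ownership (n : nat) (K : 'M[R]_n) : Prop :=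
  (forall i j, 0 <= K i j) /\ (forall i, K i i = 1) /\
  (forall x : 'cV[R]_n, 0 <= (x^T *m ((2%:R)^-1 *: (K + K^T)) *m x) 0 0).

Definition obj (n m : nat) (alpha : R) (beta : 'cV[R]_m) (gamma : 'cV[R]_n)
  (K : 'M[R]_n) (A : 'M[R]_(m, n)) (q : 'cV[R]_n) (i : 'I_n) : R :=
  profit alpha beta gamma A q i +
  \sum_(j < n | j != i) K i j * profit alpha beta gamma A q j.

Definition dev_A (n m : nat) (A : 'M[R]_(m, n)) (i : 'I_n) (a : 'cV[R]_m) : 'M[R]_(m, n) :=
  \matrix_(k, j) (if j == i then a k 0 else A k j).
Definition dev_q (n : nat) (q : 'cV[R]_n) (i : 'I_n) (t : R) : 'cV[R]_n :=
  \col_j (if j == i then t else q j 0).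

Definition equilibrium (n m : nat) (alpha : R) (beta : 'cV[R]_m) (gamma : 'cV[R]_n)
  (K : 'M[R]_n) (A : 'M[R]_(m, n)) (q : 'cV[R]_n) : Prop :=
  (forall i, unit_vec (col i A)) /\ (forall i, 0 <= q i 0) /\
  (forall i (a : 'cV[R]_m) (t : R), unit_vec a -> 0 <= t ->
     obj alpha beta gamma K (dev_A A i a) (dev_q q i t) i
     <= obj alpha beta gamma K A q i).

End Game.

From HB Require Import structures.
From mathcomp Require Import all_boot all_order all_algebra.
From mathcomp Require Import reals.
From mathcomp Require Import ring lra.
Set Implicit Arguments. Unset Strict Implicit. Unset Printing Implicit Defensive.
Import Order.TTheory GRing.Theory Num.Theory.
Local Open Scope ring_scope.

(* With q = gamma and A q = beta, the residual demand a_j^T (beta - sum_{k <> j} q_k a_k)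
   of every firm j equals gamma_j.  Along its own quantity, firm i's objective is then a
   concave quadratic maximized at the interior point gamma_i > 0, and the vanishing
   derivative gives alpha * sum_j kappa_ij gamma_j <a_j, a_i> = - gamma_i.  Weighting by
   gamma_i and summing yields alpha * tr (K (A G)^T (A G)) = - sum_i gamma_i^2 < 0 with
   G = diag gamma; but that trace is a sum of values of the quadratic form of K, which is
   nonnegative for an ownership structure. *)

Lemma mulmx_sum_col (R : comRingType) (m n : nat) (A : 'M[R]_(m, n)) (x : 'cV[R]_n) :
  A *m x = \sum_k x k 0 *: col k A.
Proof.
apply/matrixP => i l; rewrite (ord1 l) !mxE summxE.
by apply: eq_bigr => k _; rewrite !mxE mulrC.
Qed.

Lemma tr_col_mul_col (R : comRingType) (m n : nat) (A : 'M[R]_(m, n)) (j i : 'I_n) :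
  ((col j A)^T *m col i A) 0 0 = (A^T *m A) j i.
Proof. by rewrite !mxE; apply: eq_bigr => l _; rewrite !mxE. Qed.

Lemma mxtrace_mul_gram_ge0 (R : numDomainType) (m n : nat) (K : 'M[R]_n) (B : 'M[R]_(m, n)) :
  (forall x : 'cV[R]_n, 0 <= (x^T *m K *m x) 0 0) ->
  0 <= \tr (K *m (B^T *m B)).
Proof.
move=> psdK; rewrite mulmxA mxtrace_mulC mulmxA /mxtrace.
apply: sumr_ge0 => l _; have := psdK (row l B)^T.
rewrite trmxK -row_mul mxE [X in _ -> _ <= X]mxE.
by rewrite (eq_bigr (fun j => (B *m K) l j * B^T j l)) // => j _; rewrite !mxE.
Qed.

Lemma mxtrace_mul_scaled_gram (R : comRingType) (m n : nat) (K : 'M[R]_n)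
    (A : 'M[R]_(m, n)) (d : 'cV[R]_n) :
  \tr (K *m ((A *m diag_mx d^T)^T *m (A *m diag_mx d^T))) =
  \sum_i d i 0 * \sum_j K i j * d j 0 * (A^T *m A) j i.
Proof.
have gram_entry j i : ((A *m diag_mx d^T)^T *m (A *m diag_mx d^T)) j i
                      = d j 0 * (A^T *m A) j i * d i 0.
  rewrite mul_mx_diag !mxE mulr_sumr mulr_suml; apply: eq_bigr => l _.
  by rewrite !mxE; ring.
apply: eq_bigr => i _; rewrite mxE mulr_sumr; apply: eq_bigr => j _.
by rewrite gram_entry; ring.
Qed.

Lemma interior_max_quadratic (R : realFieldType) (x d c : R) :
  0 < x -> 0 < d -> (forall t, 0 <= t -> (x - t) * (d * t + c) <= 0) -> c = - (d * x).
Proof.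
move=> x_gt0 d_gt0 fmax.
(* The roots of the quadratic are x and x - v, so its vertex x - v / 2 is admissible
   unless v > 2 x, in which case already its value at 0 is positive. *)
pose v := x + c / d.
have c_eq : c = d * (v - x) by rewrite /v; field; rewrite gt_eqF.
suff v0 : v = 0 by rewrite c_eq v0 sub0r mulrN.
have [v_le|v_gt] := lerP v (2 * x).
- have := fmax (x - v / 2) ltac:(lra); rewrite c_eq.
  rewrite (_ : _ * _ = d * (v / 2) ^+ 2); last by field.
  rewrite pmulr_rle0 // => sq_le0.
  have /eqP : (v / 2) ^+ 2 = 0 by apply/le_anti; rewrite sq_le0 sqr_ge0.
  rewrite sqrf_eq0 => /eqP; lra.
- have := fmax 0 (lexx 0); rewrite c_eq subr0 mulr0 add0r.
  have : 0 < x * (d * (v - x)) by rewrite mulr_gt0 // mulr_gt0 // subr_gt0; lra.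
  lra.
Qed.

Lemma ownership_qf_ge0 (R : realType) (n : nat) (K : 'M[R]_n) (x : 'cV[R]_n) :
  ownership K -> 0 <= (x^T *m K *m x) 0 0.
Proof.
case=> _ [_ /(_ x)].
have tr_qf : (x^T *m K^T *m x) 0 0 = (x^T *m K *m x) 0 0.
  by rewrite -{2}(trmxK x) -!trmx_mul mulmxA mxE.
rewrite -mulmxA -scalemxAl mulmxDl -scalemxAr mulmxDr !mulmxA mxE [X in _ * X]mxE tr_qf.
lra.
Qed.

Lemma profit_unit_col (R : realType) (n m : nat) (alpha : R) (beta : 'cV[R]_m)
    (gamma q : 'cV[R]_n) (A : 'M[R]_(m, n)) (j : 'I_n) :
  unit_vec (col j A) ->
  profit alpha beta gamma A q j =
  alpha * q j 0 * ((col j A)^T *m (beta - A *m q)) 0 0 + (gamma j 0 - q j 0) * q j 0.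
Proof.
rewrite /unit_vec /profit => a_unit.
have -> : beta - \sum_(k < n | k != j) q k 0 *: col k A = beta - A *m q + q j 0 *: col j A.
  by rewrite mulmx_sum_col [in RHS](bigD1 j) //= opprD addrA addrAC subrK.
rewrite mulmxDr -scalemxAr mxE [X in _ * (_ + X)]mxE a_unit; ring.
Qed.

Lemma subr_dev_q (R : realType) (n : nat) (q : 'cV[R]_n) (i : 'I_n) (t : R) :
  q - dev_q q i t = (q i 0 - t) *: delta_mx i 0.
Proof.
apply/matrixP => k l; rewrite (ord1 l) !mxE eqxx andbT.
by case: (eqVneq k i) => [->|_]; rewrite ?mulr1 // subrr mulr0.
Qed.

Lemma obj_dev_q (R : realType) (n m : nat) (alpha : R) (beta : 'cV[R]_m) (gamma : 'cV[R]_n)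
    (K : 'M[R]_n) (A : 'M[R]_(m, n)) (i : 'I_n) (t : R) :
  (forall j, unit_vec (col j A)) -> A *m gamma = beta ->
  obj alpha beta gamma K A (dev_q gamma i t) i =
  (gamma i 0 - t) *
  ((1 + alpha) * t + alpha * \sum_(j < n | j != i) K i j * gamma j 0 * (A^T *m A) j i).
Proof.
move=> a_unit <-.
have residual j : ((col j A)^T *m (A *m gamma - A *m dev_q gamma i t)) 0 0
                  = (gamma i 0 - t) * (A^T *m A) j i.
  by rewrite -mulmxBr subr_dev_q -scalemxAr -colE -scalemxAr mxE tr_col_mul_col.
have gram_ii : (A^T *m A) i i = 1 by rewrite -tr_col_mul_col; apply: a_unit.
have dev_j j : dev_q gamma i t j 0 = if j == i then t else gamma j 0 by rewrite mxE.
rewrite /obj profit_unit_col // residual gram_ii dev_j eqxx.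
under eq_bigr => j ji do rewrite profit_unit_col // residual dev_j (negPf ji) subrr mul0r addr0.
rewrite [in RHS]mulrDr !mulr_sumr; congr (_ + _); first ring.
by apply: eq_bigr => j _; ring.
Qed.

Lemma dev_A_col (R : realType) (m n : nat) (A : 'M[R]_(m, n)) (i : 'I_n) :
  dev_A A i (col i A) = A.
Proof. by apply/matrixP => k j; rewrite !mxE; case: eqP => // ->. Qed.

Lemma dev_q_id (R : realType) (n : nat) (q : 'cV[R]_n) (i : 'I_n) : dev_q q i (q i 0) = q.
Proof. by apply/matrixP => k l; rewrite (ord1 l) !mxE; case: eqP => // ->. Qed.

Lemma equilibrium_first_order (R : realType) (n m : nat) (alpha : R) (beta : 'cV[R]_m)
    (gamma : 'cV[R]_n) (K : 'M[R]_n) (A : 'M[R]_(m, n)) (i : 'I_n) :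
  0 < alpha -> 0 < gamma i 0 -> ownership K ->
  equilibrium alpha beta gamma K A gamma -> A *m gamma = beta ->
  alpha * \sum_j K i j * gamma j 0 * (A^T *m A) j i = - gamma i 0.
Proof.
move=> alpha_gt0 gamma_gt0 [_ [K_ii _]] [a_unit [_ best]] A_gamma.
set T := \sum_(j < n | j != i) K i j * gamma j 0 * (A^T *m A) j i.
have obj_le t : 0 <= t -> (gamma i 0 - t) * ((1 + alpha) * t + alpha * T) <= 0.
  move=> t_ge0; have := best i (col i A) t (a_unit i) t_ge0.
  rewrite dev_A_col -[X in _ <= obj _ _ _ _ _ X _](dev_q_id gamma i).
  by rewrite !obj_dev_q // subrr mul0r.
have := interior_max_quadratic gamma_gt0 _ obj_le.
have gram_ii : (A^T *m A) i i = 1 by rewrite -tr_col_mul_col; apply: a_unit.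
rewrite (bigD1 i) //= -/T K_ii gram_ii mul1r mulr1 mulrDr => ->; lra.
Qed.

Theorem corollary2 (R : realType) (n m : nat) (alpha : R)
  (beta : 'cV[R]_m) (gamma : 'cV[R]_n) :
  (2 <= n)%N -> (2 <= m)%N -> 0 < alpha -> unit_vec beta ->
  (forall i, 0 < gamma i 0) ->
  ~ (exists (K : 'M[R]_n) (A : 'M[R]_(m, n)) (q : 'cV[R]_n),
       ownership K /\ equilibrium alpha beta gamma K A q /\
       A *m q = beta /\ q = gamma).
Proof.
move=> n_ge2 _ alpha_gt0 _ gamma_gt0 [K [A [q [K_own [eqm [A_gamma q_gamma]]]]]].
subst q.
have foc i := equilibrium_first_order alpha_gt0 (gamma_gt0 i) K_own eqm A_gamma.
have := mxtrace_mul_gram_ge0 (A *m diag_mx gamma^T) (fun x => ownership_qf_ge0 x K_own).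
rewrite mxtrace_mul_scaled_gram -(pmulr_rge0 _ alpha_gt0) mulr_sumr.
under eq_bigr => i _ do rewrite mulrCA foc mulrN.
rewrite sumrN oppr_ge0 leNgt => /negP; apply.
pose i0 : 'I_n := Ordinal (leq_trans (isT : (0 < 2)%N) n_ge2).
rewrite (bigD1 i0) //= ltr_pwDl ?mulr_gt0 ?sumr_ge0 // => i _.
by rewrite mulr_ge0 // ltW.
Qed.
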